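(* Let $G$ be a bipartite graph with bipartition $(U,W)$, let $M$ be a perfect matching of $G$, and let $k$ be a positive integer. If $G$ is minimal $k$-extendable, then $D=D(G,M)$ is minimal $k$-strong.
   Context: All graphs are finite and simple, and all digraphs are finite with no loops and no multiple arcs. For a bipartite graph $G$ with bipartition $(U,W)$ and a perfect matching $M$, the digraph $D(G,M)$ is defined as follows. Its vertex set is $M$. For distinct edges $e=uw$ and $e'=u'w'$ of $M$ with $u,u'\in U$ and $w,w'\in W$, there is an arc from $e$ to $e'$ if and only if $uw'\in E(G)$. A digraph is strong if for any two distinct vertices $x,y$ there are directed paths from $x$ to $y$ and from $y$ to $x$. A set $S\subset V(D)$ is a separator if $D-S$ is not strong. $D$ is $k$-strong if $|V(D)|\ge k+1$ and $D$ has no separator of order less than $k$. $D$ is minimal $k$-strong if it is $k$-strong but $D-a$ is not $k$-strong for every arc $a$. A connected graph $G$ is $k$-extendable (for $k\le(|V(G)|-1)/2$) if $G$ has a matching of size $k$ and every matching of size $k$ is contained in a perfect matching of $G$. $G$ is minimal $k$-extendable if it is $k$-extendable but $G-e$ is not $k$-extendable for every edge $e\in E(G)$. *)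

From mathcomp Require Import all_boot.
Set Implicit Arguments. Unset Strict Implicit. Unset Printing Implicit Defensive.

(* ---------- Graphs ----------
   A finite simple graph is given by a vertex type T : finType (the vertex
   set is all of T) and an edge set E : {set {set T}} whose members are
   2-element subsets of T. *)
Section Graphs.
Variable T : finType.

Definition simple_graph (E : {set {set T}}) : Prop :=
  forall e, e \in E -> #|e| = 2.

Definition adj (E : {set {set T}}) : rel T := fun x y => [set x; y] \in E.

Definition connected_graph (E : {set {set T}}) : Prop :=
  forall x y : T, connect (adj E) x y.

Definition bipartite_with (E : {set {set T}}) (U : {set T}) : Prop :=
  forall e, e \in E -> #|e :&: U| = 1.

Definition matching (E M : {set {set T}}) : Prop :=
  M \subset E /\
  (forall e1 e2, e1 \in M -> e2 \in M -> e1 != e2 -> [disjoint e1 & e2]).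

Definition perfect_matching (E M : {set {set T}}) : Prop :=
  matching E M /\ (forall x : T, exists2 e, e \in M & x \in e).

(* k <= (|V(G)|-1)/2 is read as 2k + 1 <= |V(G)|. *)
Definition k_extendable (E : {set {set T}}) (k : nat) : Prop :=
  [/\ connected_graph E,
      k.*2.+1 <= #|T|,
      (exists M, matching E M /\ #|M| = k) &
      (forall M, matching E M -> #|M| = k ->
         exists2 P, perfect_matching E P & M \subset P)].

Definition minimal_k_extendable (E : {set {set T}}) (k : nat) : Prop :=
  k_extendable E k /\ (forall e, e \in E -> ~ k_extendable (E :\ e) k).

End Graphs.

(* ---------- Digraphs ----------
   A digraph is given by a vertex set VD : {set V} and an arc set
   AD : {set V * V} (arcs are ordered pairs; no loops/multiple arcs). *)
Section Digraphs.
Variable V : finType.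

Definition arc_rel (VD : {set V}) (AD : {set V * V}) : rel V :=
  fun x y => [&& x \in VD, y \in VD & (x, y) \in AD].

Definition strong (VD : {set V}) (AD : {set V * V}) : Prop :=
  forall x y, x \in VD -> y \in VD -> x != y ->
    connect (arc_rel VD AD) x y /\ connect (arc_rel VD AD) y x.

Definition is_separator (VD : {set V}) (AD : {set V * V}) (S : {set V}) : Prop :=
  S \subset VD /\ ~ strong (VD :\: S) AD.

Definition k_strong (VD : {set V}) (AD : {set V * V}) (k : nat) : Prop :=
  k.+1 <= #|VD| /\
  (forall S : {set V}, is_separator VD AD S -> k <= #|S|).

Definition minimal_k_strong (VD : {set V}) (AD : {set V * V}) (k : nat) : Prop :=
  k_strong VD AD k /\ (forall a, a \in AD -> ~ k_strong VD (AD :\ a) k).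

End Digraphs.

(* ---------- The digraph D(G,M) ----------
   Vertex set M; arc e -> e' (e != e' in M) iff u w' in E, where u is the
   U-end of e and w' is the W-end (W = ~: U) of e'. *)
Definition DGM_arcs (T : finType) (E : {set {set T}}) (U : {set T})
    (M : {set {set T}}) : {set {set T} * {set T}} :=
  [set p : {set T} * {set T} |
     [&& p.1 \in M, p.2 \in M, p.1 != p.2 &
         [exists u : T, exists w : T,
            [&& u \in p.1 :&: U, w \in p.2 :\: U & [set u; w] \in E]]]].

(* G is k-extendable iff D(G,M) is k-strong; moreover each edge uw of G outside M
   (u in U) gives exactly one arc of D(G,M), and D(G - uw, M) is D(G,M) minus that
   arc, so minimality carries over from G to D(G,M).

   k-extendable -> k-strong: take a minimal separator S with |S| < k and let R be
   the vertices reachable from some x in D - S.  Some arc q -> r, or some path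
   q -> z -> r through a z in S, enters R.  Extend its non-matching edges together
   with S (resp. S - z) to a perfect matching P.  The alternating cycle of P and M
   through these edges starts in r and never leaves R and z, since arcs leaving R
   end in S and S - z lies in P; yet it has to come back to q.

   k-strong -> k-extendable: given a matching F of size k, Hall's condition holds
   between the vertices of U and of ~: U not covered by F, since a set S with fewer
   than |S| + k neighbours would make the M-edges at its neighbours other than the
   mates of S, fewer than k of them, a separator of D(G,M). *)

From mathcomp Require Import all_boot zify.
Set Implicit Arguments. Unset Strict Implicit. Unset Printing Implicit Defensive.

Section FiniteSets.
Variable T : finType.
Implicit Types (A B C : {set T}) (r : rel T).

Lemma disjointP A B :
  reflect (forall x, x \in A -> x \in B -> False) [disjoint A & B].
Proof.
rewrite disjoints_subset; apply: (iffP subsetP) => [AB x /AB | AB x xA].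
  by rewrite inE => /negP.
by rewrite inE; apply/negP; exact: AB.
Qed.

Lemma connect_exit r (A : {pred T}) x y :
  connect r x y -> x \in A -> y \notin A ->
  exists a b, [/\ r a b, a \in A & b \notin A].
Proof.
move=> /connectP[p]; elim: p x => [|z p IHp] x /=; first by move=> _ -> ->.
case/andP=> rxz pz ly xA yA.
case: (boolP (z \in A)) => zA; first exact: IHp pz ly zA yA.
by exists x, z; split.
Qed.

Lemma connect_stable r (A : {pred T}) x y :
  (forall a b, r a b -> a \in A -> b \in A) -> connect r x y -> x \in A -> y \in A.
Proof.
move=> rA cxy xA; apply/negPn/negP => yA.
by have [a [b [/rA rab /rab aA]]] := connect_exit cxy xA yA; rewrite aA.
Qed.

Lemma injective_stable_preim (f : T -> T) A x :
  injective f -> {in A, forall a, f a \in A} -> f x \in A -> x \in A.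
Proof.
move=> finj fA; have fAA : f @: A = A.
  apply/eqP; rewrite eqEcard card_imset // leqnn andbT.
  by apply/subsetP => _ /imsetP[a aA ->]; exact: fA.
by rewrite -{1}fAA => /imsetP[a aA /finj ->].
Qed.

Lemma leq_card_setD A B : #|A| <= #|A :\: B| + #|B|.
Proof. by rewrite -{1}(cardsID B A) addnC leq_add2l subset_leq_card ?subsetIr. Qed.

Lemma intermediate_set_card A C n :
  A \subset C -> #|A| <= n <= #|C| ->
  exists B, [/\ A \subset B, B \subset C & #|B| = n].
Proof.
move=> AC; elim: n => [|n IHn] /andP[leAn lenC].
  by exists A; split=> //; apply/eqP; rewrite -leqn0.
have [eqAn|neqAn] := eqVneq #|A| n.+1; first by exists A.
have [B [AB BC cardB]] : exists B, [/\ A \subset B, B \subset C & #|B| = n].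
  by apply: IHn; rewrite -ltnS ltn_neqAle neqAn leAn (ltnW lenC).
have /properP[_ [x xC xB]] : B \proper C by rewrite properEcard BC cardB.
exists (x |: B); split; first exact: subset_trans AB (subsetUr _ _).
  by rewrite subUset sub1set xC.
by rewrite cardsU1 xB cardB.
Qed.

Lemma disjoint_side_pairs (U : {set T}) u w u' w' :
    u \in U -> u' \in U -> w \notin U -> w' \notin U -> u != u' -> w != w' ->
  [disjoint [set u; w] & [set u'; w']].
Proof.
move=> uU u'U wU w'U uu' ww'; apply/disjointP => v.
rewrite !inE => /orP[]/eqP-> /orP[]/eqP eqv.
- by rewrite eqv eqxx in uu'.
- by rewrite -eqv uU in w'U.
- by rewrite eqv u'U in wU.
- by rewrite eqv eqxx in ww'.
Qed.

End FiniteSets.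

Section Digraphs.
Variables (V : finType) (VD : {set V}) (AD : {set V * V}).

Lemma strongP :
  reflect (strong VD AD)
    [forall x in VD, forall y in VD, (x != y) ==> connect (arc_rel VD AD) x y].
Proof.
apply: (iffP forall_inP) => [conn x y xV yV xy | str x xV].
  have c a b : a \in VD -> b \in VD -> a != b -> connect (arc_rel VD AD) a b.
    by move=> aV bV ab; move/forall_inP: (conn a aV) => /(_ b bV); rewrite ab.
  by split; apply: c; rewrite // eq_sym.
by apply/forall_inP => y yV; apply/implyP => xy; case: (str x y xV yV xy).
Qed.

Definition out_closed (X : {set V}) :=
  forall a b, a \in X -> b \in VD -> (a, b) \in AD -> b \in X.

Definition reach (x : V) := [set y | connect (arc_rel VD AD) x y].

Lemma reach_sub x : x \in VD -> reach x \subset VD.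
Proof.
move=> xV; apply/subsetP => y; rewrite inE => /connect_stable; apply=> //.
by move=> a b /and3P[].
Qed.

Lemma reach_out_closed x : x \in VD -> out_closed (reach x).
Proof.
move=> xV a b xa bV ab; have aV := subsetP (reach_sub xV) a xa.
by move: xa; rewrite !inE => xa; apply: connect_trans xa (connect1 _); rewrite /arc_rel aV bV.
Qed.

Lemma out_closed_not_strong (X : {set V}) x y :
  x \in X -> x \in VD -> y \in VD -> y \notin X -> out_closed X -> ~ strong VD AD.
Proof.
move=> xX xV yV yX clX str.
have xy : x != y by apply: contraNneq yX => <-.
have [cxy _] := str x y xV yV xy.
move: yX; rewrite (connect_stable _ cxy xX) // => a b /and3P[_ bV ab] aX.
exact: clX ab.
Qed.

End Digraphs.

Section Hall.
Variables (T : finType) (r : rel T).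
Implicit Types (A B C S : {set T}) (f : T -> T).

Definition nbhd S B := [set b in B | [exists a in S, r a b]].

Definition marriage A B f :=
  {in A, forall a, f a \in B /\ r a (f a)} /\ {in A &, injective f}.

Definition hall_condition A B := forall S, S \subset A -> #|S| <= #|nbhd S B|.

Lemma nbhd_sub S B : nbhd S B \subset B.
Proof. by apply/subsetP => b; rewrite inE => /andP[]. Qed.

Lemma nbhdU S1 S2 B : nbhd (S1 :|: S2) B = nbhd S1 B :|: nbhd S2 B.
Proof.
apply/setP => b; rewrite !inE -andb_orr; congr (_ && _).
apply/existsP/orP => [[a /andP[/setUP[] aS rab]] | [] /existsP[a /andP[aS rab]]].
- by left; apply/existsP; exists a; rewrite aS.
- by right; apply/existsP; exists a; rewrite aS.
- by exists a; rewrite inE aS.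
- by exists a; rewrite inE aS orbT.
Qed.

Lemma nbhdD S B C : nbhd S (B :\: C) = nbhd S B :\: C.
Proof. by apply/setP => b; rewrite !inE andbA. Qed.

Lemma nbhd_nbhd S S0 B : S \subset S0 -> nbhd S (nbhd S0 B) = nbhd S B.
Proof.
move=> SS0; apply/setP => b; rewrite !inE -andbA; congr (_ && _).
apply: andb_idl => /existsP[a /andP[aS rab]].
by apply/existsP; exists a; rewrite (subsetP SS0).
Qed.

Lemma marriage_glue A1 A2 B1 B2 f1 f2 :
  [disjoint B1 & B2] -> marriage A1 B1 f1 -> marriage A2 B2 f2 ->
  marriage (A1 :|: A2) (B1 :|: B2) (fun a => if a \in A1 then f1 a else f2 a).
Proof.
move=> dB [f1B f1inj] [f2B f2inj].
have inA2 a : a \in A1 :|: A2 -> a \in A1 = false -> a \in A2.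
  by case/setUP => // ->.
split=> [a aA | a b aA bA].
  case: ifP => aA1; last have [fB rf] := f2B a (inA2 a aA aA1).
    by have [fB rf] := f1B a aA1; rewrite inE fB.
  by rewrite inE fB orbT.
case: ifP => aA1; case: ifP => bA1 fab.
- exact: f1inj.
- have [faB _] := f1B a aA1; have [fbB _] := f2B b (inA2 b bA bA1).
  by move: (disjointFr dB faB); rewrite fab fbB.
- have [faB _] := f2B a (inA2 a aA aA1); have [fbB _] := f1B b bA1.
  by move: (disjointFr dB fbB); rewrite -fab faB.
- exact: f2inj (inA2 a aA aA1) (inA2 b bA bA1) fab.
Qed.

Lemma marriage0 B f : marriage set0 B f.
Proof. by split=> [a|a b]; rewrite inE. Qed.

Lemma marriage1 a b : r a b -> marriage [set a] [set b] (fun=> b).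
Proof. by move=> rab; split=> [x /set1P-> | x y /set1P-> /set1P->]; rewrite ?inE. Qed.

Section HallInduction.
Variable n : nat.
Hypothesis IHn : forall A B, #|A| < n -> hall_condition A B -> exists f, marriage A B f.

Lemma hall_tight A B S0 :
    #|A| <= n -> hall_condition A B -> S0 \proper A -> S0 != set0 ->
  #|nbhd S0 B| <= #|S0| -> exists f, marriage A B f.
Proof.
move=> leAn hallAB S0A S0n0 tightS0; have S0sA := proper_sub S0A.
have [f1 mf1] : exists f, marriage S0 (nbhd S0 B) f.
  apply: IHn => [|S SS0]; first exact: leq_trans (proper_card S0A) leAn.
  by rewrite nbhd_nbhd //; apply: hallAB; exact: subset_trans SS0 S0sA.
have [f2 mf2] : exists f, marriage (A :\: S0) (B :\: nbhd S0 B) f.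
  apply: IHn => [|S SAS0].
    rewrite cardsDS //; move: S0n0 (subset_leq_card S0sA); rewrite -card_gt0; lia.
  have dSS0 : [disjoint S & S0].
    by apply/disjointP => x /(subsetP SAS0); rewrite inE => /andP[/negP].
  have := hallAB (S :|: S0); rewrite subUset S0sA (subset_trans SAS0 (subsetDl _ _)).
  rewrite nbhdU nbhdD cardsD cardsU (disjoint_setI0 dSS0) cards0 cardsU => /(_ isT).
  have := subset_leq_card (subsetIl (nbhd S B) (nbhd S0 B)).
  have := subset_leq_card (subsetIr (nbhd S B) (nbhd S0 B)); lia.
exists (fun a => if a \in S0 then f1 a else f2 a).
rewrite -(setID A S0) (setIidPr S0sA) -(setID B (nbhd S0 B)) (setIidPr (nbhd_sub S0 B)).
by apply: marriage_glue mf1 mf2; apply/disjointP => x xN; rewrite inE xN.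
Qed.

Lemma hall_slack A B a0 :
    #|A| <= n -> hall_condition A B -> a0 \in A ->
    (forall S, S \proper A -> S != set0 -> #|S| < #|nbhd S B|) ->
  exists f, marriage A B f.
Proof.
move=> leAn hallAB a0A slack.
have [b0 b0N] : exists b0, b0 \in nbhd [set a0] B.
  by apply/set0Pn; rewrite -card_gt0 (leq_trans _ (hallAB _ _)) ?cards1 ?sub1set.
have [b0B ra0b0] : b0 \in B /\ r a0 b0.
  by move: b0N; rewrite inE => /andP[-> /existsP[a /andP[/set1P-> ->]]].
have [f mf] : exists f, marriage (A :\ a0) (B :\ b0) f.
  apply: IHn => [|S SA]; first by move: leAn; rewrite (cardsD1 a0 A) a0A; lia.
  have [->|Sn0] := eqVneq S set0; first by rewrite cards0.
  have SpA : S \proper A.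
    rewrite properE (subset_trans SA (subsetDl _ _)); apply/subsetPn.
    by exists a0 => //; apply/negP => /(subsetP SA); rewrite !inE eqxx.
  have := slack S SpA Sn0; rewrite nbhdD cardsD.
  have := subset_leq_card (subsetIr (nbhd S B) [set b0]); rewrite cards1; lia.
exists (fun a => if a \in [set a0] then b0 else f a).
rewrite -(setD1K a0A) -(setD1K b0B).
by apply: marriage_glue (marriage1 ra0b0) mf; rewrite disjoints1 !inE eqxx.
Qed.

End HallInduction.

Theorem hall_marriage A B : hall_condition A B -> exists f, marriage A B f.
Proof.
have [n] := ubnP #|A|; elim: n A B => // n IHn A B /ltnSE leAn hallAB.
have [->|[a0 a0A]] := set_0Vmem A; first by exists id; exact: marriage0.
pose tight S0 := [&& S0 \proper A, S0 != set0 & #|nbhd S0 B| <= #|S0|].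
have [/existsP[S0 /and3P[S0A S0n0 tightS0]] | noTight] := boolP [exists S0, tight S0].
  exact: hall_tight IHn _ _ _ leAn hallAB S0A S0n0 tightS0.
apply: hall_slack IHn _ _ _ leAn hallAB a0A _ => S SA Sn0; rewrite ltnNge.
by apply: contra noTight => tightS; apply/existsP; exists S; rewrite /tight SA Sn0.
Qed.

End Hall.

Section Pairings.
Variable T : finType.
Implicit Types (M P : {set {set T}}) (x y : T).

(* A perfect matching as a partition into pairs: [pblock M x] is the edge of M
   at x, and [mate M x] its other end. *)
Definition pairing M :=
  [/\ trivIset M, cover M = [set: T] & forall e, e \in M -> #|e| = 2].

Definition mate M x := odflt x [pick y in pblock M x :\ x].

Variable M : {set {set T}}.
Hypothesis pairM : pairing M.

Lemma pblock_pairing x : pblock M x \in M.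
Proof. by case: pairM => _ covM _; rewrite pblock_mem // covM inE. Qed.

Lemma mem_pblock_pairing x : x \in pblock M x.
Proof. by case: pairM => _ covM _; rewrite mem_pblock covM inE. Qed.

Lemma pblock_pairing_def e x : e \in M -> x \in e -> pblock M x = e.
Proof. by case: pairM => tiM _ _; exact: def_pblock. Qed.

Lemma pblockD1_mate x : pblock M x :\ x = [set mate M x].
Proof.
have [_ _ card2] := pairM.
have /cards1P[y Ey] : #|pblock M x :\ x| == 1.
  by have := cardsD1 x (pblock M x); rewrite mem_pblock_pairing card2 ?pblock_pairing; lia.
rewrite Ey /mate; congr [set _]; case: pickP => [z|/(_ y)] /=; rewrite Ey inE.
  by move/eqP.
by rewrite eqxx.
Qed.

Lemma mate_pblock x : mate M x \in pblock M x.
Proof.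
by have := set11 (mate M x); rewrite -pblockD1_mate in_setD1 => /andP[_ ->].
Qed.

Lemma mate_neq x : mate M x != x.
Proof.
by have := set11 (mate M x); rewrite -pblockD1_mate in_setD1 => /andP[-> _].
Qed.

Lemma pblock_mate2 x : pblock M x = [set x; mate M x].
Proof. by rewrite -pblockD1_mate setD1K ?mem_pblock_pairing. Qed.

Lemma pblock_mate x : pblock M (mate M x) = pblock M x.
Proof. exact: pblock_pairing_def (pblock_pairing x) (mate_pblock x). Qed.

Lemma mate_uniq x y : y \in pblock M x -> y != x -> y = mate M x.
Proof. by move=> yx ynx; apply/set1P; rewrite -pblockD1_mate in_setD1 ynx. Qed.

Lemma mateK : involutive (mate M).
Proof.
move=> x; apply/esym/mate_uniq; last by rewrite eq_sym mate_neq.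
by rewrite pblock_mate mem_pblock_pairing.
Qed.

Lemma mate_inj : injective (mate M).
Proof. exact: inv_inj mateK. Qed.

Lemma mate_pair x y : [set x; y] \in M -> mate M x = y.
Proof.
move=> xyM; have [_ _ card2] := pairM.
have xy : x != y by move: (card2 _ xyM); rewrite cards2; case: (x != y).
apply/esym/mate_uniq; last by rewrite eq_sym.
by rewrite (pblock_pairing_def xyM) !inE eqxx ?orbT.
Qed.

End Pairings.

Section DGMArcs.
Variables (T : finType) (E : {set {set T}}) (U : {set T}) (M : {set {set T}}).
Hypothesis pairM : pairing M.

Lemma DGM_arc_edge e1 e2 : (e1, e2) \in DGM_arcs E U M ->
  exists u w, [/\ adj E u w, u \in U, w \notin U, pblock M u = e1 & pblock M w = e2].
Proof.
rewrite inE /= => /and4P[e1M e2M _ /existsP[u /existsP[w]]].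
rewrite !inE => /and3P[/andP[ue1 uU] /andP[wU we2] uwE].
by exists u, w; split=> //; apply: pblock_pairing_def.
Qed.

Lemma DGM_arc_mem e1 e2 : (e1, e2) \in DGM_arcs E U M -> e1 \in M /\ e2 \in M.
Proof. by rewrite inE /= => /and4P[-> ->]. Qed.

Lemma DGM_arc_neq e1 e2 : (e1, e2) \in DGM_arcs E U M -> e1 != e2.
Proof. by rewrite inE /= => /and4P[]. Qed.

Lemma edge_DGM_arc u w :
    adj E u w -> u \in U -> w \notin U -> pblock M u != pblock M w ->
  (pblock M u, pblock M w) \in DGM_arcs E U M.
Proof.
move=> uwE uU wU neq; rewrite inE /= !pblock_pairing // neq /=.
apply/existsP; exists u; apply/existsP; exists w.
by rewrite !inE !mem_pblock_pairing // uU wU.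
Qed.

End DGMArcs.

Section Matchings.
Variables (T : finType) (E : {set {set T}}).
Implicit Types (F M : {set {set T}}).

Lemma simple_graphS (E' : {set {set T}}) :
  E' \subset E -> simple_graph E -> simple_graph E'.
Proof. by move=> E'E simpleE e /(subsetP E'E); exact: simpleE. Qed.

Lemma bipartite_withS (E' : {set {set T}}) (U : {set T}) :
  E' \subset E -> bipartite_with E U -> bipartite_with E' U.
Proof. by move=> E'E bipE e /(subsetP E'E); exact: bipE. Qed.

Lemma matchingP F : matching E F <-> F \subset E /\ trivIset F.
Proof.
by split=> [[FE dF] | [FE /trivIsetP tiF]]; split=> //; apply/trivIsetP.
Qed.

Lemma matching1 e : e \in E -> matching E [set e].
Proof. by move=> eE; apply/matchingP; rewrite sub1set eE; split=> //; exact: trivIset1. Qed.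

Lemma matchingS F1 F2 : F1 \subset F2 -> matching E F2 -> matching E F1.
Proof.
move=> F12 /matchingP[F2E tiF2]; apply/matchingP.
by split; [exact: subset_trans F12 F2E | exact: trivIsetS F12 tiF2].
Qed.

Lemma matchingU F1 F2 :
  matching E F1 -> matching E F2 -> [disjoint cover F1 & cover F2] ->
  matching E (F1 :|: F2).
Proof.
move=> /matchingP[F1E tiF1] /matchingP[F2E tiF2] dF; apply/matchingP.
by rewrite subUset F1E F2E; split=> //; apply: trivIsetU.
Qed.

Lemma perfect_matching_pairing M :
  simple_graph E -> perfect_matching E M -> pairing M.
Proof.
move=> simpleE [/matchingP[ME tiM] covM]; split=> // [|e eM].
  apply/setP => x; rewrite inE; have [e eM xe] := covM x.
  by apply/bigcupP; exists e.
exact/simpleE/(subsetP ME).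
Qed.

Lemma card_coverI F (A : {set T}) :
  trivIset F -> #|cover F :&: A| = \sum_(e in F) #|e :&: A|.
Proof.
move=> tiF; rewrite -sum1_card.
rewrite (eq_bigl [pred x | (x \in cover F) && (x \in A)]) => [|x]; last exact: in_setI.
rewrite big_trivIset_cond //; apply: eq_bigr => e _.
by rewrite -sum1_card; apply: eq_bigl => x; rewrite inE.
Qed.

Lemma cover_pairs (A : {set T}) (f : T -> T) :
  cover [set [set a; f a] | a in A] = A :|: f @: A.
Proof.
apply/setP => v; apply/bigcupP/setUP => [[_ /imsetP[a aA ->]] | [vA | /imsetP[a aA ->]]].
- by rewrite !inE => /orP[]/eqP->; [left | right; apply: imset_f].
- by exists [set v; f v]; [apply: imset_f | rewrite !inE eqxx].
- by exists [set a; f a]; [apply: imset_f | rewrite !inE eqxx orbT].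
Qed.

End Matchings.

Section Bipartite.
Variables (T : finType) (E : {set {set T}}) (U : {set T}).
Hypotheses (simpleE : simple_graph E) (bipE : bipartite_with E U).
Implicit Types (F M P : {set {set T}}).

Lemma edge_side_uniq e u v :
  e \in E -> u \in e -> v \in e -> (u \in U) = (v \in U) -> u = v.
Proof.
move=> eE ue ve; have := cardsID U e; rewrite (bipE eE) (simpleE eE) => cardDU.
case: (boolP (u \in U)) => uU vU.
  by apply: (card_le1_eqP (A := e :&: U)); rewrite ?bipE // inE ?ue ?ve -?vU.
apply: (card_le1_eqP (A := e :\: U)); first lia.
  by rewrite inE ve -vU.
by rewrite inE ue uU.
Qed.

Lemma adj_neq a b : adj E a b -> a != b.
Proof. by move/simpleE; rewrite cards2; case: (a != b). Qed.

Lemma adj_side a b : adj E a b -> (a \in U) = (b \notin U).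
Proof.
move=> ab; have := edge_side_uniq ab (setU11 a [set b]) (setU1r a (set11 b)).
by case: (a \in U); case: (b \in U) => // /(_ erefl) eq_ab;
  move: (adj_neq ab); rewrite eq_ab eqxx.
Qed.

Lemma card_cover_side F :
  matching E F -> #|cover F :&: U| = #|F| /\ #|cover F :\: U| = #|F|.
Proof.
move=> /matchingP[FE tiF]; rewrite setDE !card_coverI // -sum1_card.
split; apply: eq_bigr => e /(subsetP FE) eE; first exact: bipE.
by have := cardsID U e; rewrite (bipE eE) (simpleE eE) setDE; lia.
Qed.

Lemma adj_mate P x : perfect_matching E P -> adj E x (mate P x).
Proof.
move=> pmP; have [[PE _] _] := pmP; have pairP := perfect_matching_pairing simpleE pmP.
by rewrite /adj -pblock_mate2 // (subsetP PE) ?pblock_pairing.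
Qed.

Lemma mate_side P x : perfect_matching E P -> (mate P x \in U) = (x \notin U).
Proof. by move=> pmP; rewrite (adj_side (adj_mate x pmP)) negbK. Qed.

Lemma pblock_inj_side P u v :
  perfect_matching E P -> (u \in U) = (v \in U) -> pblock P u = pblock P v -> u = v.
Proof.
move=> pmP uvU puv; have [[PE _] _] := pmP.
have pairP := perfect_matching_pairing simpleE pmP.
apply: (edge_side_uniq (subsetP PE _ (pblock_pairing pairP u))) => //.
  exact: mem_pblock_pairing.
by rewrite puv mem_pblock_pairing.
Qed.

Lemma marriage_matching (A B : {set T}) (f : T -> T) :
    A \subset U -> B \subset ~: U -> marriage (adj E) A B f ->
  matching E [set [set a; f a] | a in A].
Proof.
move=> AU BW [fB finj]; apply/matchingP; split.
  by apply/subsetP => _ /imsetP[a aA ->]; have [_] := fB a aA.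
apply/trivIsetP => _ _ /imsetP[a aA ->] /imsetP[b bA ->] neq.
have ab : a != b by apply: contraNneq neq => ->.
have fW x : x \in A -> f x \notin U.
  by move=> xA; have [fxB _] := fB x xA; have := subsetP BW _ fxB; rewrite inE.
have fab : f a != f b by apply: contra ab => /eqP/finj->.
exact: disjoint_side_pairs (subsetP AU a aA) (subsetP AU b bA) (fW a aA) (fW b bA) ab fab.
Qed.

Lemma marriage_perfect_matching F (f : T -> T) :
    matching E F -> marriage (adj E) (U :\: cover F) (~: U :\: cover F) f ->
    f @: (U :\: cover F) = ~: U :\: cover F ->
  perfect_matching E (F :|: [set [set a; f a] | a in U :\: cover F]).
Proof.
move=> mF mf fAB; have mG := marriage_matching (subsetDl _ _) (subsetDl _ _) mf.
split.
  apply: matchingU mF mG _; rewrite cover_pairs fAB.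
  by apply/disjointP => v vF; rewrite !inE vF.
move=> v; have [/bigcupP[e eF ve]|vF] := boolP (v \in cover F).
  by exists e; rewrite // inE eF.
have : v \in cover [set [set a; f a] | a in U :\: cover F].
  by rewrite cover_pairs fAB !inE vF /= orbN.
by case/bigcupP => e eG ve; exists e; rewrite // inE eG orbT.
Qed.

End Bipartite.

Section PerfectMatching.
Variables (T : finType) (E : {set {set T}}) (U : {set T}) (M : {set {set T}}).
Hypotheses (simpleE : simple_graph E) (bipE : bipartite_with E U)
  (pmM : perfect_matching E M).
Implicit Types (F N P S R X Z : {set {set T}}).

Let pairM : pairing M := perfect_matching_pairing simpleE pmM.
Local Notation D := (DGM_arcs E U M).

Lemma card_side : #|U| = #|M| /\ #|~: U| = #|M|.
Proof.
have [[_ covM _] [mM _]] := (pairM, pmM).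
by have := card_cover_side simpleE bipE mM; rewrite covM setTI setTD.
Qed.

Lemma card_vertices : #|T| = #|M|.*2.
Proof. by have [cU cW] := card_side; rewrite -(cardsC U) cU cW addnn. Qed.

Lemma exists_pblock e : e \in M -> exists v, pblock M v = e.
Proof.
have [_ _ card2] := pairM; move=> eM.
have /card_gt0P[v ve] : 0 < #|e| by rewrite card2.
by exists v; exact: pblock_pairing_def ve.
Qed.

(* Follow the edge of P, then the edge of M: on U, the orbits of [alt_step P]
   trace the alternating cycles of P and M. *)
Definition alt_step P x := mate M (mate P x).

Section AlternatingStep.
Variable P : {set {set T}}.
Hypothesis pmP : perfect_matching E P.
Let pairP : pairing P := perfect_matching_pairing simpleE pmP.

Lemma alt_step_inj : injective (alt_step P).
Proof. by move=> x y /(mate_inj pairM) /(mate_inj pairP). Qed.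

Lemma alt_step_side x : (alt_step P x \in U) = (x \in U).
Proof.
by rewrite /alt_step (mate_side simpleE bipE _ pmM) (mate_side simpleE bipE _ pmP) negbK.
Qed.

Lemma alt_step_fix x : pblock M x \in P -> alt_step P x = x.
Proof.
move=> xP; rewrite /alt_step; have -> : mate P x = mate M x.
  by rewrite /mate (pblock_pairing_def pairP xP) ?mem_pblock_pairing.
exact: mateK.
Qed.

Lemma alt_step_pair u w : [set u; w] \in P -> alt_step P u = mate M w.
Proof. by move=> uwP; rewrite /alt_step (mate_pair pairP uwP). Qed.

Lemma alt_step_arc x : x \in U -> alt_step P x != x ->
  (pblock M x, pblock M (alt_step P x)) \in D.
Proof.
move=> xU moved.
have -> : pblock M (alt_step P x) = pblock M (mate P x) by exact: pblock_mate.
apply: edge_DGM_arc => //; first exact: adj_mate.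
  by rewrite (mate_side simpleE bipE _ pmP) xU.
apply: contra moved => /eqP eq_pblock; apply/eqP/(pblock_inj_side simpleE bipE pmM).
  by rewrite alt_step_side.
by rewrite /alt_step pblock_mate.
Qed.

(* Arcs leaving R end in R or in S, and [alt_step P] is the identity on the
   edges of S that lie in P; by injectivity the orbit never reaches them. *)
Lemma alt_step_closed S R Z x :
    S \subset P :|: Z -> out_closed (M :\: S) D R ->
    {in U, forall a, pblock M a \in Z -> pblock M (alt_step P a) \in R :|: Z} ->
  x \in U -> pblock M (alt_step P x) \in R :|: Z -> pblock M x \in R :|: Z.
Proof.
move=> SPZ clR stepZ xU xRZ.
pose A := [set a in U | pblock M a \in R :|: Z].
suff : x \in A by rewrite inE => /andP[].
apply: (injective_stable_preim alt_step_inj) => [a|]; last by rewrite inE alt_step_side xU.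
rewrite inE => /andP[aU aRZ]; rewrite inE alt_step_side aU /=.
case/setUP: aRZ => [aR|]; last exact: stepZ.
have [-> | moved] := eqVneq (alt_step P a) a; first by rewrite inE aR.
have arc := alt_step_arc aU moved.
case: (boolP (pblock M (alt_step P a) \in S)) => [/(subsetP SPZ)|notS].
  case/setUP => [inP|inZ]; last by rewrite inE inZ orbT.
  by move: moved; rewrite -(inj_eq alt_step_inj) (alt_step_fix inP) eqxx.
by rewrite inE (clR _ _ aR _ arc) // inE notS pblock_pairing.
Qed.

End AlternatingStep.

Lemma k_extendable_extend k N X S :
    k_extendable E k -> matching E N -> {in cover N, forall v, pblock M v \in X} ->
    S \subset M :\: X -> #|S| + #|N| <= k -> k <= #|M :\: X| + #|N| ->
  exists2 P, perfect_matching E P & N :|: S \subset P.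
Proof.
move=> [_ _ _ extend] mN NX SMX leSk lekM.
have [|B [SB BMX cardB]] := intermediate_set_card (n := k - #|N|) SMX.
  by apply/andP; split; lia.
have BM : B \subset M := subset_trans BMX (subsetDl _ _).
have dNB : [disjoint cover N & cover B].
  apply/disjointP => v /NX vX /bigcupP[b bB vb]; have := subsetP BMX b bB.
  by rewrite inE -(pblock_pairing_def pairM (subsetP BM b bB) vb) vX.
have NB0 : N :&: B = set0.
  apply/setP => e; rewrite !inE; apply/negP => /andP[eN eB].
  have [NE _] := (matchingP _ _).1 mN.
  have /card_gt0P[v ve] : 0 < #|e| by rewrite simpleE // (subsetP NE).
  by move/disjointP/(_ v): dNB; apply; apply/bigcupP; exists e.
have [|P pmP NBP] := extend (N :|: B) (matchingU mN (matchingS BM pmM.1) dNB).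
  by rewrite cardsU NB0 cards0 cardB; lia.
by exists P => //; apply: subset_trans NBP; exact: setUS SB.
Qed.

Lemma connected_crossing_arc R e1 e2 :
    connected_graph E -> e1 \in R -> e1 \in M -> e2 \in M -> e2 \notin R ->
  exists q r, (q, r) \in D /\ (q \in R) != (r \in R).
Proof.
move=> connE e1R e1M e2M e2R.
have [[v1 pv1] [v2 pv2]] := (exists_pblock e1M, exists_pblock e2M).
have [||a [b [ab aR bR]]] := connect_exit (A := [pred v | pblock M v \in R]) (connE v1 v2).
- by rewrite inE /= pv1.
- by rewrite inE /= pv2.
move: aR bR; rewrite !inE /= => aR bR.
have neq : pblock M a != pblock M b by apply: contraNneq bR => <-.
have [aU | aW] := boolP (a \in U).
  exists (pblock M a), (pblock M b); rewrite aR (negbTE bR) edge_DGM_arc //.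
  by rewrite -(adj_side simpleE bipE ab).
have ba : adj E b a by rewrite /adj setUC.
exists (pblock M b), (pblock M a); rewrite aR (negbTE bR) edge_DGM_arc //.
- by rewrite (adj_side simpleE bipE ba).
- by rewrite eq_sym.
Qed.

Section SmallSeparator.
Variables (k : nat) (S R : {set {set T}}).
Hypotheses (extE : k_extendable E k) (ltkM : k < #|M|) (SM : S \subset M)
  (ltSk : #|S| < k) (RMS : R \subset M :\: S) (clR : out_closed (M :\: S) D R).

Lemma no_arc_into_closed q r : q \in M :\: S -> q \notin R -> r \in R -> (q, r) \notin D.
Proof.
move=> qMS qR rR; apply/negP => arc; have rMS := subsetP RMS r rR.
have [u [w [uw uU _ pu pw]]] := DGM_arc_edge pairM arc; subst q r.
have [||||P pmP NSP] := k_extendable_extend (N := [set [set u; w]])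
    (X := [set pblock M u; pblock M w]) (S := S) extE (matching1 uw).
- by move=> v; rewrite cover1 !inE => /orP[]/eqP->; rewrite eqxx ?orbT.
- apply/subsetP => s sS; rewrite !inE (subsetP SM) // andbT.
  by apply/negP => /orP[]/eqP es; [move: qMS | move: rMS]; rewrite inE -es sS.
- by rewrite cards1 addn1.
- rewrite cards1 -ltnS -addnS; apply: leq_trans ltkM _.
  apply: leq_trans (leq_card_setD M [set pblock M u; pblock M w]) _.
  by rewrite leq_add2l cards2; case: (_ != _).
have uwP : [set u; w] \in P by apply: (subsetP NSP); rewrite !inE eqxx.
case/negP: qR; rewrite -(setU0 R).
apply: (alt_step_closed pmP _ clR) => //.
- by rewrite setU0 (subset_trans _ NSP) ?subsetUr.
- by move=> a _; rewrite inE.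
- by rewrite (alt_step_pair pmP uwP) pblock_mate // setU0.
Qed.

Lemma no_path_into_closed q z r :
  q \in M :\: S -> q \notin R -> z \in S -> r \in R -> (q, z) \in D -> (z, r) \notin D.
Proof.
move=> qMS qR zS rR arc1; apply/negP => arc2; have rMS := subsetP RMS r rR.
have [uq [wz [uqwz uqU wzU pq pwz]]] := DGM_arc_edge pairM arc1.
have [uz [wr [uzwr uzU wrU puz pr]]] := DGM_arc_edge pairM arc2; subst q r.
have neq_z e : e \in M :\: S -> e != z.
  by move=> eMS; apply/eqP => ez; move: eMS; rewrite ez inE zS.
have uq_uz : uq != uz by apply/eqP => eq; move: (neq_z _ qMS); rewrite eq puz eqxx.
have wz_wr : wz != wr by apply/eqP => eq; move: (neq_z _ rMS); rewrite -eq pwz eqxx.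
have dN := disjoint_side_pairs uqU uzU wzU wrU uq_uz wz_wr.
pose N : {set {set T}} := [set [set uq; wz]; [set uz; wr]].
pose X : {set {set T}} := [set pblock M uq; z; pblock M wr].
have mN : matching E N by apply: matchingU; rewrite ?cover1 //; exact: matching1.
have cardN : #|N| = 2.
  suff e12 : [set uq; wz] != [set uz; wr] by rewrite cards2 e12.
  apply/eqP => e12; move/disjointP/(_ uq): dN; apply; first by rewrite !inE eqxx.
  by rewrite -e12 !inE eqxx.
have [||||P pmP NSP] := k_extendable_extend (N := N) (X := X) (S := S :\ z) extE mN.
- move=> v /bigcupP[e]; rewrite /N !inE => /orP[]/eqP->.
    by rewrite !inE => /orP[]/eqP->; rewrite ?pwz eqxx ?orbT.
  by rewrite !inE => /orP[]/eqP->; rewrite ?puz eqxx ?orbT.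
- apply/subsetP => s; rewrite /X !inE => /andP[sz sS].
  rewrite (subsetP SM) // (negbTE sz) orbF andbT.
  by apply/negP => /orP[]/eqP es; [move: qMS | move: rMS]; rewrite inE -es sS.
- by move: ltSk; rewrite (cardsD1 z S) zS cardN addn2.
- rewrite cardN -ltnS -addnS; apply: leq_trans ltkM _.
  apply: leq_trans (leq_card_setD M X) _; rewrite leq_add2l /X -setUA cardsU1 cards2.
  by case: (_ \notin _); case: (_ != _).
have uqwzP : [set uq; wz] \in P by apply: (subsetP NSP); rewrite /N !inE eqxx.
have uzwrP : [set uz; wr] \in P by apply: (subsetP NSP); rewrite /N !inE eqxx orbT.
have : pblock M uq \in R :|: [set z].
  apply: (alt_step_closed pmP _ clR) => //.
  - apply/subsetP => s sS; have [->|sz] := eqVneq s z; first by rewrite !inE eqxx orbT.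
    by rewrite inE (subsetP NSP) // !inE sz sS orbT.
  - move=> a aU; rewrite inE => /eqP paz.
    have -> : a = uz by apply: (pblock_inj_side simpleE bipE pmM); rewrite ?aU ?uzU // paz puz.
    by rewrite (alt_step_pair pmP uzwrP) pblock_mate // inE rR.
  - by rewrite (alt_step_pair pmP uqwzP) pblock_mate // pwz !inE eqxx orbT.
by rewrite !inE (negbTE qR) (negbTE (neq_z _ qMS)).
Qed.

Lemma closed_full_of_connected x :
  connected_graph E -> S = set0 -> x \in R -> M :\: S \subset R.
Proof.
move=> connE S0 xR; apply/subsetP => y; rewrite S0 setD0 => yM; apply/negPn/negP => yR.
have xM : x \in M by move: (subsetP RMS x xR); rewrite S0 setD0.
have [q [r [arc]]] := connected_crossing_arc connE xR xM yM yR.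
have [qM rM] := DGM_arc_mem arc.
have inMS e : e \in M -> e \in M :\: S by rewrite S0 setD0.
have [qR|qR] := boolP (q \in R); have [rR|rR] := boolP (r \in R) => // _.
  by rewrite (clR qR (inMS r rM) arc) in rR.
by rewrite (negbTE (no_arc_into_closed (inMS q qM) qR rR)) in arc.
Qed.

Lemma closed_full_of_strong z x :
  z \in S -> strong (M :\: (S :\ z)) D -> x \in R -> M :\: S \subset R.
Proof.
move=> zS strz xR; apply/subsetP => y yMS; apply/negPn/negP => yR.
have inMSz v : v \in M :\: S -> v \in M :\: (S :\ z).
  by rewrite !inE negb_and => /andP[-> ->]; rewrite orbT.
have inMS v : v \in M :\: (S :\ z) -> v != z -> v \in M :\: S.
  by rewrite !inE negb_and negbK => /andP[/orP[/eqP->|->] ->]; rewrite ?eqxx.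
have xy : x != y by apply: contraNneq yR => <-.
have [_ cyx] := strz x y (inMSz _ (subsetP RMS x xR)) (inMSz _ yMS) xy.
have [||a [b [/and3P[aV _ ab] aR bR]]] := connect_exit (A := ~: R) cyx.
- by rewrite in_setC.
- by rewrite in_setC xR.
move: aR bR; rewrite !in_setC negbK => aR bR.
have [az|anz] := eqVneq a z; last first.
  by rewrite (negbTE (no_arc_into_closed (inMS a aV anz) aR bR)) in ab.
subst a.
have [||q [c [/and3P[qV _ qc] qRz cRz]]] := connect_exit (A := ~: (z |: R)) cyx.
- by rewrite in_setC in_setU1 negb_or yR andbT; apply: contraTneq yMS => ->; rewrite inE zS.
- by rewrite in_setC in_setU1 xR orbT.
move: qRz cRz; rewrite !in_setC !in_setU1 negbK negb_or => /andP[qnz qR] /orP[/eqP cz|cR].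
  by subst c; rewrite (negbTE (no_path_into_closed (inMS q qV qnz) qR zS bR qc)) in ab.
by rewrite (negbTE (no_arc_into_closed (inMS q qV qnz) qR cR)) in qc.
Qed.

End SmallSeparator.

Lemma k_extendable_strong_setD k S :
  k_extendable E k -> k < #|M| -> S \subset M -> #|S| < k -> strong (M :\: S) D.
Proof.
move=> extE ltkM; have [n] := ubnP #|S|; elim: n S => // n IHn S /ltnSE leSn SM ltSk.
suff reach_all x y : x \in M :\: S -> y \in M :\: S -> connect (arc_rel (M :\: S) D) x y.
  by move=> x y xMS yMS _; split; apply: reach_all.
move=> xMS yMS; have xR : x \in reach (M :\: S) D x by rewrite inE connect0.
suff /subsetP/(_ y yMS) : M :\: S \subset reach (M :\: S) D x by rewrite inE.
have RMS := reach_sub D xMS; have clR := reach_out_closed (AD := D) xMS.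
have [S0|[z zS]] := set_0Vmem S.
  have [connE _ _ _] := extE.
  exact: (closed_full_of_connected extE ltkM SM ltSk RMS clR connE S0 xR).
apply: (closed_full_of_strong extE ltkM SM ltSk RMS clR zS _ xR).
apply: IHn; first by apply: leq_trans leSn; rewrite (cardsD1 z S) zS.
  exact: subset_trans (subsetDl _ _) SM.
by apply: leq_ltn_trans ltSk; exact: subset_leq_card (subsetDl _ _).
Qed.

Theorem k_extendable_k_strong k : k_extendable E k -> k_strong M D k.
Proof.
move=> extE; have ltkM : k < #|M|.
  by have [_ cardT _ _] := extE; rewrite card_vertices -addnn in cardT; lia.
split=> // S [SM nstr]; rewrite leqNgt; apply/negP => ltSk.
exact: nstr (k_extendable_strong_setD extE ltkM SM ltSk).
Qed.

Lemma card_uncovered_side F : matching E F ->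
  #|U :\: cover F| = #|M| - #|F| /\ #|~: U :\: cover F| = #|M| - #|F|.
Proof.
move=> mF; have [cardFU cardFW] := card_cover_side simpleE bipE mF.
have [cardU cardW] := card_side.
by rewrite !cardsD (setIC U) cardFU (setIC (~: U)) -setDE cardFW cardU cardW.
Qed.

Lemma k_strong_strong k : 0 < k -> k_strong M D k -> strong M D.
Proof.
move=> k0 [_ sepk]; have [//|nstr] := @strongP _ M D.
have : is_separator M D set0 by split; rewrite ?sub0set ?setD0.
by move/sepk; rewrite cards0 leqNgt k0.
Qed.

Lemma strong_connected : strong M D -> connected_graph E.
Proof.
move=> str x y; pose C := [set v | connect (adj E) x v].
have pblockC v : v \in C -> pblock M v \subset C.
  rewrite inE => xv; rewrite (pblock_mate2 pairM); apply/subsetP => w.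
  rewrite !inE => /orP[]/eqP-> //; apply: connect_trans xv (connect1 _).
  exact: adj_mate pmM.
have xC : x \in C by rewrite inE connect0.
suff /subsetP/(_ y (mem_pblock_pairing pairM y)) : pblock M y \subset C by rewrite inE.
have [<-|neq] := eqVneq (pblock M x) (pblock M y); first exact: pblockC.
have [cxy _] := str _ _ (pblock_pairing pairM x) (pblock_pairing pairM y) neq.
have step e1 e2 : arc_rel M D e1 e2 ->
    e1 \in [pred e : {set T} | e \subset C] -> e2 \in [pred e : {set T} | e \subset C].
  move=> /and3P[_ _ /(DGM_arc_edge pairM)[u [w [uw _ _ <- <-]]]] /subsetP uC.
  apply: pblockC; rewrite inE; apply: connect_trans (connect1 uw).
  by have := uC u (mem_pblock_pairing pairM u); rewrite inE.
exact: (connect_stable step cxy (pblockC x xC)).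
Qed.

Lemma closed_pblock_nbhd (S : {set T}) : S \subset U ->
  out_closed (M :\: pblock M @: (nbhd (adj E) S (~: U) :\: mate M @: S)) D
    (pblock M @: S).
Proof.
move=> SU _ e2 /imsetP[s sS ->] e2MO arc.
have [u [w [uw uU wU pu pw]]] := DGM_arc_edge pairM arc.
have us : u = s.
  by apply: (pblock_inj_side simpleE bipE pmM) => //; rewrite uU (subsetP SU).
subst u e2; have wN : w \in nbhd (adj E) S (~: U).
  by rewrite !inE wU; apply/existsP; exists s; rewrite sS.
have [/imsetP[s' s'S ->]|wmS] := boolP (w \in mate M @: S).
  by rewrite (pblock_mate pairM) imset_f.
by move: e2MO; rewrite inE imset_f // inE wmS.
Qed.

Lemma disjoint_pblock_nbhd (S : {set T}) : S \subset U ->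
  [disjoint pblock M @: S & pblock M @: (nbhd (adj E) S (~: U) :\: mate M @: S)].
Proof.
move=> SU; apply/disjointP => _ /imsetP[s sS ->] /imsetP[w].
rewrite !inE => /andP[wmS /andP[wU _]] psw; move/negP: wmS; apply.
apply/imsetP; exists s => //; apply: (mate_uniq pairM).
  by rewrite psw mem_pblock_pairing.
by apply: contraNneq wU => ->; rewrite (subsetP SU).
Qed.

Lemma k_strong_nbhd k (S : {set T}) :
    k_strong M D k -> S \subset U -> S != set0 -> #|S| + k <= #|M| ->
  #|S| + k <= #|nbhd (adj E) S (~: U)|.
Proof.
move=> [_ sepk] SU /set0Pn[s0 s0S] leSkM.
pose N : {set T} := nbhd (adj E) S (~: U).
pose O : {set {set T}} := pblock M @: (N :\: mate M @: S).
pose X : {set {set T}} := pblock M @: S.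
have mateSN : mate M @: S \subset N.
  apply/subsetP => _ /imsetP[s sS ->]; rewrite !inE (mate_side simpleE bipE _ pmM).
  rewrite (subsetP SU) //=; apply/existsP; exists s; rewrite sS; exact: adj_mate.
rewrite leqNgt; apply/negP => ltN.
have cardO : #|O| < k.
  apply: leq_ltn_trans (leq_imset_card _ _) _.
  rewrite cardsDS // card_imset ?ltn_subLR //; last exact: mate_inj.
  by rewrite -(card_imset _ (mate_inj pairM)) subset_leq_card.
have [y yM yXO] : exists2 y, y \in M & y \notin X :|: O.
  apply/subsetPn/negP => /subset_leq_card leMXO.
  have ltXOM : #|X :|: O| < #|M|.
    apply: leq_ltn_trans (leq_card_setU X O).1 (leq_trans _ leSkM).
    by rewrite -addnS leq_add ?leq_imset_card.
  by move: (leq_ltn_trans leMXO ltXOM); rewrite ltnn.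
have : k <= #|O|.
  apply: sepk; split; first by apply/subsetP => _ /imsetP[w _ ->]; exact: pblock_pairing.
  apply: (out_closed_not_strong (X := X) (x := pblock M s0) (y := y)).
  - exact: imset_f.
  - by rewrite inE pblock_pairing // andbT (disjointFr (disjoint_pblock_nbhd SU)) ?imset_f.
  - by rewrite inE yM andbT; move: yXO; rewrite inE negb_or => /andP[_ ->].
  - by move: yXO; rewrite inE negb_or => /andP[].
  - exact: closed_pblock_nbhd.
by rewrite leqNgt cardO.
Qed.

Lemma k_strong_hall k F :
    k_strong M D k -> matching E F -> #|F| = k ->
  hall_condition (adj E) (U :\: cover F) (~: U :\: cover F).
Proof.
move=> kstr mF cardF S SUF; have SU := subset_trans SUF (subsetDl _ _).
have [->|Sn0] := eqVneq S set0; first by rewrite cards0.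
have leSkM : #|S| + k <= #|M|.
  have [ltkM _] := kstr; rewrite -(subnK (ltnW ltkM)) leq_add2r -cardF.
  by rewrite -(card_uncovered_side mF).1 subset_leq_card.
have cardNF : #|nbhd (adj E) S (~: U) :&: cover F| <= k.
  rewrite -cardF -(card_cover_side simpleE bipE mF).2; apply/subset_leq_card/subsetP => v.
  by rewrite !inE => /andP[/andP[-> _] ->].
rewrite nbhdD cardsD leq_subRL ?subset_leq_card ?subsetIl // addnC.
exact: leq_trans (leq_add (leqnn _) cardNF) (k_strong_nbhd kstr SU Sn0 leSkM).
Qed.

Theorem k_strong_k_extendable k : 0 < k -> k_strong M D k -> k_extendable E k.
Proof.
move=> k0 kstr; have [ltkM _] := kstr; split.
- exact: strong_connected (k_strong_strong k0 kstr).
- by rewrite card_vertices (leq_trans (leqnSn _)) // -doubleS leq_double.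
- have [|B [_ BM cardB]] := intermediate_set_card (n := k) (sub0set M).
    by rewrite cards0 (ltnW ltkM).
  by exists B; split=> //; exact: matchingS BM pmM.1.
move=> F mF cardF; have [f mf] := hall_marriage (k_strong_hall kstr mF cardF).
exists (F :|: [set [set a; f a] | a in U :\: cover F]); last exact: subsetUl.
have [fB finj] := mf; have [cardUF cardWF] := card_uncovered_side mF.
apply: marriage_perfect_matching mF mf _.
apply/eqP; rewrite eqEcard card_in_imset // cardUF cardWF leqnn andbT.
by apply/subsetP => _ /imsetP[a aA ->]; have [] := fB a aA.
Qed.

Lemma perfect_matching_delete u w :
  pblock M u != pblock M w -> perfect_matching (E :\ [set u; w]) M.
Proof.
move=> neq; have [/matchingP[ME tiM] covM] := pmM; split=> //; apply/matchingP.
split=> //; apply/subsetP => e eM; rewrite !inE (subsetP ME) // andbT.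
apply: contraNneq neq => euw.
have ue : u \in e by rewrite euw !inE eqxx.
have we : w \in e by rewrite euw !inE eqxx orbT.
by rewrite (pblock_pairing_def pairM eM ue) (pblock_pairing_def pairM eM we).
Qed.

Lemma DGM_arcs_delete u w :
    adj E u w -> u \in U -> pblock M u != pblock M w ->
  DGM_arcs (E :\ [set u; w]) U M = D :\ (pblock M u, pblock M w).
Proof.
move=> uw uU neq; have wU : w \notin U by rewrite -(adj_side simpleE bipE uw).
have same_edge u' w' : u' \in U -> w' \notin U ->
    ([set u'; w'] == [set u; w]) = (u' == u) && (w' == w).
  move=> u'U w'U; apply/eqP/andP => [euw | [/eqP-> /eqP->] //].
  have : u' \in [set u; w] by rewrite -euw !inE eqxx.
  have : w' \in [set u; w] by rewrite -euw !inE eqxx orbT.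
  rewrite !inE => /orP[/eqP w'u|->]; first by rewrite w'u uU in w'U.
  by case/orP => [-> // | /eqP u'w]; rewrite u'w (negbTE wU) in u'U.
apply/setP => -[e1 e2]; rewrite in_setD1; apply/idP/andP => [arc | [na arc]].
- have ne := DGM_arc_neq arc.
  have [u' [w' [/setD1P[nuw u'w'] u'U w'U pu pw]]] := DGM_arc_edge pairM arc; subst e1 e2.
  rewrite edge_DGM_arc //; split=> //; apply: contra nuw.
  rewrite xpair_eqE (same_edge _ _ u'U w'U) => /andP[/eqP pu /eqP pw].
  have -> : u' = u by apply: (pblock_inj_side simpleE bipE pmM) pu; rewrite u'U uU.
  have -> : w' = w.
    by apply: (pblock_inj_side simpleE bipE pmM) pw; rewrite (negbTE w'U) (negbTE wU).
  by rewrite !eqxx.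
- have ne := DGM_arc_neq arc.
  have [u' [w' [u'w' u'U w'U pu pw]]] := DGM_arc_edge pairM arc; subst e1 e2.
  rewrite edge_DGM_arc // /adj in_setD1 -/(adj E u' w') u'w' andbT (same_edge _ _ u'U w'U).
  by apply: contra na => /andP[/eqP-> /eqP->].
Qed.

End PerfectMatching.

Unset Implicit Arguments.

Theorem theorem5 (T : finType) (E : {set {set T}}) (U : {set T})
    (M : {set {set T}}) (k : nat) :
  simple_graph E ->
  bipartite_with E U ->
  perfect_matching E M ->
  0 < k ->
  minimal_k_extendable E k ->
  minimal_k_strong M (DGM_arcs E U M) k.
Proof.
move=> simpleE bipE pmM k0 [extE minE].
split; first exact: k_extendable_k_strong.
move=> [e1 e2] arc kstr; have pairM := perfect_matching_pairing simpleE pmM.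
have [u [w [uw uU _ pu pw]]] := DGM_arc_edge pairM arc.
have neq : pblock M u != pblock M w by rewrite pu pw (DGM_arc_neq arc).
have deleted := subsetDl E [set [set u; w]].
apply: (minE _ uw); apply: (k_strong_k_extendable (simple_graphS deleted simpleE)
  (bipartite_withS deleted bipE) (perfect_matching_delete simpleE pmM neq) k0).
by rewrite (DGM_arcs_delete simpleE bipE pmM uw uU neq) pu pw.
Qed.
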